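(* For $n\in\mathbb{N}$ and $0<x<1$, let $A(n,x)=(-1)^{n+1}\sum_{m=1}^{\infty}\cos(2\pi m x)\sum_{r=0}^{n-1}\frac{(n+r)!}{(n-r-1)!}\frac{1}{(2\pi m)^{2r+2}}$. Then \[ A(n,x)=(-1)^{n}\pi\sum_{m=1}^{\infty}Y_{2n}(4\pi m)\cos(2\pi m x)+(-1)^{n+1}\sum_{m=1}^{\infty}\Big\{2(\gamma+\log(2\pi m))J_{2n}(4\pi m)+P_{2n}(4\pi m)-2Q_{2n}(4\pi m)\Big\}\cos(2\pi m x), \] both series on the right converging.
   Context: $\gamma$ is Euler's constant, $\psi=\Gamma'/\Gamma$, $J_k$ and $Y_k$ are the Bessel functions of the first and second kind of integer order $k$. For $k\in\mathbb{N}$ and $z>0$, $P_{k}(z)=-\sum_{\lceil k/2\rceil\le r\le k-1}\frac{(k-r-1)!}{r!}\left(\frac z2\right)^{2r-k}+\sum_{\ell=0}^{\infty}(-1)^{\ell}\left(\frac z2\right)^{k+2\ell}\frac{\psi(k+\ell+1)-\psi(\ell+1)}{\ell!\,(k+\ell)!}$ and $Q_{k}(z)=\sum_{\ell=0}^{\infty}(-1)^{\ell}\left(\frac z2\right)^{k+2\ell}\frac{\psi(k+\ell+1)+\gamma}{\ell!\,(k+\ell)!}$. *)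

From Stdlib Require Import Reals Lra Lia ClassicalEpsilon Factorial.
Open Scope R_scope.

(* Sum of a convergent series sum_{j>=0} a j (arbitrary value if divergent). *)
Definition series_sum (a : nat -> R) : R :=
  epsilon (inhabits 0) (fun l => infinite_sum a l).

Fixpoint rsum (f : nat -> R) (n : nat) : R :=
  match n with O => 0 | S k => rsum f k + f k end.

(* sum_{a <= r <= b} f r  (empty if b < a) *)
Definition rsum_range (f : nat -> R) (a b : nat) : R :=
  rsum (fun i => f (a + i)%nat) (S b - a).

Definition harmonic (N : nat) : R := rsum (fun j => / INR (S j)) N.

Definition euler_gamma : R :=
  epsilon (inhabits 0) (fun g => Un_cv (fun N => harmonic N - ln (INR N)) g).

(* digamma function psi = Gamma'/Gamma for s > 0, via the standard series
   psi(s) = -gamma + sum_{j>=0} (1/(j+1) - 1/(j+s)) *)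
Definition digamma (s : R) : R :=
  - euler_gamma + series_sum (fun j => / (INR j + 1) - / (INR j + s)).

Definition besselJ (k : nat) (z : R) : R :=
  series_sum (fun l => (-1) ^ l * (z / 2) ^ (k + 2 * l)
                       / (INR (fact l) * INR (fact (k + l)))).

(* Bessel function of the second kind of integer order k, z > 0 (DLMF 10.8.1) *)
Definition besselY (k : nat) (z : R) : R :=
  - (/ PI) * rsum (fun r => INR (fact (k - r - 1)) / INR (fact r)
                             * (z / 2) ^ (2 * r) / (z / 2) ^ k) k
  + (2 / PI) * ln (z / 2) * besselJ k z
  - (/ PI) * series_sum (fun l => (-1) ^ l * (z / 2) ^ (k + 2 * l)
                       * (digamma (INR l + 1) + digamma (INR (k + l) + 1))
                       / (INR (fact l) * INR (fact (k + l)))).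

(* P_k(z) as in the paper; (z/2)^(2r-k) written as (z/2)^(2r)/(z/2)^k *)
Definition P_fun (k : nat) (z : R) : R :=
  - rsum_range (fun r => INR (fact (k - r - 1)) / INR (fact r)
                          * (z / 2) ^ (2 * r) / (z / 2) ^ k)
               ((k + 1) / 2) (k - 1)
  + series_sum (fun l => (-1) ^ l * (z / 2) ^ (k + 2 * l)
                 * (digamma (INR (k + l) + 1) - digamma (INR l + 1))
                 / (INR (fact l) * INR (fact (k + l)))).

Definition Q_fun (k : nat) (z : R) : R :=
  series_sum (fun l => (-1) ^ l * (z / 2) ^ (k + 2 * l)
                 * (digamma (INR (k + l) + 1) + euler_gamma)
                 / (INR (fact l) * INR (fact (k + l)))).

(* m-th term (m >= 1) of the series defining A(n,x) *)
Definition A_term (n : nat) (x : R) (m : nat) : R :=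
  (-1) ^ (n + 1) * cos (2 * PI * INR m * x)
  * rsum (fun r => INR (fact (n + r)) / INR (fact (n - r - 1))
                   / (2 * PI * INR m) ^ (2 * r + 2)) n.

From Stdlib Require Import Reals Lra Lia ClassicalEpsilon Factorial.
From Coquelicot Require Import Coquelicot.
Open Scope R_scope.

(* Writing [J_k], [Y_k], [P_k], [Q_k] through the entire series [sum_l (-1)^l w^l / (l! (k+l)!)]
   and its companion weighted by harmonic numbers (the digamma function at integers), one finds
   [2 (gamma + log (z/2)) J_{2n} + P_{2n} - 2 Q_{2n} = pi Y_{2n} + F_n], where [F_n] is the
   Laurent part [sum_{r<n}] of [Y_{2n}]. At [z = 4 pi m], [F_n] is the inner sum of [A(n,x)],
   which is [O(1/m^2)]; so the identity holds once [sum_m Y_{2n}(4 pi m) cos (2 pi m x)]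
   converges. Since [Y_{2n}] solves Bessel's equation, [u = sqrt z Y_{2n}] satisfies
   [u'' = (q - 1) u] with [q = O(1/z^2)]; an energy estimate bounds [u], and then
   [u cos z - u' sin z] varies by [O(1/z^2)], so [sqrt z Y_{2n} = L + O(1/z)] along [z = 4 pi m].
   The main term [L cos (2 pi m x) / sqrt (4 pi m)] converges by Dirichlet's test, the error
   term absolutely. *)
Lemma series_sum_eq a l : infinite_sum a l -> series_sum a = l.
Proof.
  intro H. unfold series_sum.
  pose proof (epsilon_spec (inhabits 0) (fun l => infinite_sum a l) (ex_intro _ l H)).
  eapply uniqueness_sum; eauto.
Qed.

Lemma sum_n_rsum a N : sum_n a N = rsum a (S N).
Proof.
  induction N as [|N IH].
  - rewrite sum_O. simpl. symmetry. apply Rplus_0_l.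
  - rewrite sum_Sn, IH. reflexivity.
Qed.

Lemma infinite_sum_Series a : ex_series a -> infinite_sum a (Series a).
Proof. intro. apply is_series_Reals. now apply Series_correct. Qed.

Lemma infinite_sum_ext a b l : (forall n, a n = b n) -> infinite_sum a l -> infinite_sum b l.
Proof.
  intros H Ha. apply is_series_Reals. apply is_series_Reals in Ha.
  eapply is_series_ext; eauto.
Qed.

Lemma infinite_sum_scal a l c : infinite_sum a l -> infinite_sum (fun n => c * a n) (c * l).
Proof.
  intro H. apply is_series_Reals in H. apply is_series_Reals.
  exact (is_series_scal c _ _ H).
Qed.

Lemma infinite_sum_plus a b la lb : infinite_sum a la -> infinite_sum b lb ->
  infinite_sum (fun n => a n + b n) (la + lb).
Proof.
  intros Ha Hb. apply is_series_Reals in Ha. apply is_series_Reals in Hb.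
  apply is_series_Reals. exact (is_series_plus _ _ _ _ Ha Hb).
Qed.

Lemma infinite_sum_minus a b la lb : infinite_sum a la -> infinite_sum b lb ->
  infinite_sum (fun n => a n - b n) (la - lb).
Proof.
  intros Ha Hb. apply is_series_Reals in Ha. apply is_series_Reals in Hb.
  apply is_series_Reals. exact (is_series_minus _ _ _ _ Ha Hb).
Qed.

Lemma ex_series_Rabs_le (a b : nat -> R) :
  (forall n, Rabs (a n) <= b n) -> ex_series b -> ex_series a.
Proof.
  intros H Hb. apply ex_series_Rabs.
  apply (@ex_series_le R_AbsRing R_CompleteNormedModule _ b); auto.
  intro n. unfold norm; simpl; unfold abs; simpl. rewrite Rabs_Rabsolu. auto.
Qed.

Lemma ex_series_telescope (b : nat -> R) :
  is_lim_seq b 0 -> ex_series (fun m => b m - b (S m)).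
Proof.
  intro H. exists (b 0%nat - 0).
  change (is_lim_seq (sum_n (fun m => b m - b (S m))) (b 0%nat - 0)).
  apply (is_lim_seq_ext (fun N => b 0%nat - b (S N))).
  - intro N. rewrite sum_n_rsum. induction N as [|N IH]; simpl in *.
    + ring.
    + rewrite <- IH. ring.
  - apply is_lim_seq_minus'. apply is_lim_seq_const. now apply (is_lim_seq_incr_1 b).
Qed.

Lemma is_lim_seq_inv_S : is_lim_seq (fun N => / INR (S N)) 0.
Proof.
  replace (Finite 0) with (Rbar_inv p_infty) by reflexivity.
  apply (is_lim_seq_inv (fun N => INR (S N))); [|discriminate].
  apply (is_lim_seq_incr_1 INR). apply is_lim_seq_INR.
Qed.

Lemma ex_series_inv_sq : ex_series (fun m => / INR (S m) ^ 2).
Proof.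
  apply (ex_series_Rabs_le _ (fun m => 2 * (/ INR (S m) - / INR (S (S m))))).
  - intro m. rewrite Rabs_right.
    2: { apply Rle_ge, Rlt_le, Rinv_0_lt_compat, pow_lt, lt_0_INR; lia. }
    rewrite !S_INR. pose proof (pos_INR m).
    replace (2 * (/ (INR m + 1) - / (INR m + 1 + 1)))
      with (2 / ((INR m + 1) * (INR m + 1 + 1))) by (field; lra).
    apply Rle_div_r; [nra|]. apply (Rmult_le_reg_r ((INR m + 1) ^ 2)); [nra|].
    field_simplify; nra.
  - apply (ex_series_scal_l 2 (fun m => / INR (S m) - / INR (S (S m)))).
    apply (ex_series_telescope (fun m => / INR (S m))), is_lim_seq_inv_S.
Qed.

Lemma harmonic_S N : harmonic (S N) = harmonic N + / INR (S N).
Proof. reflexivity. Qed.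

Lemma inv_INR_S_pos m : 0 < / INR (S m).
Proof. apply Rinv_0_lt_compat, lt_0_INR; lia. Qed.

Lemma inv_INR_S_le1 m : / INR (S m) <= 1.
Proof. rewrite <- Rinv_1. apply Rinv_le_contravar; [lra|]. apply (le_INR 1); lia. Qed.

Lemma harmonic_ge0 N : 0 <= harmonic N.
Proof.
  induction N as [|N IH]; [unfold harmonic; simpl; lra|].
  rewrite harmonic_S. pose proof (inv_INR_S_pos N). lra.
Qed.

Lemma harmonic_ge1 N : (1 <= N)%nat -> 1 <= harmonic N.
Proof.
  induction 1 as [|N _ IH]; [unfold harmonic; simpl; lra|].
  rewrite harmonic_S. pose proof (inv_INR_S_pos N). lra.
Qed.

Lemma harmonic_add_le N l : 0 <= harmonic (N + l) - harmonic N <= INR l / INR (S N).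
Proof.
  induction l as [|l IH].
  - rewrite Nat.add_0_r. simpl INR. unfold Rdiv. lra.
  - rewrite Nat.add_succ_r, harmonic_S, (S_INR l).
    pose proof (inv_INR_S_pos (N + l)).
    assert (/ INR (S (N + l)) <= / INR (S N)).
    { apply Rinv_le_contravar; [apply lt_0_INR; lia | apply le_INR; lia]. }
    unfold Rdiv in *. lra.
Qed.

Lemma digamma_partial_sum l M :
  rsum (fun j => / (INR j + 1) - / (INR j + (INR l + 1))) M
  = harmonic l - (harmonic (M + l) - harmonic M).
Proof.
  induction M as [|M IH].
  - simpl. unfold harmonic at 3. simpl. ring.
  - simpl rsum. rewrite IH. simpl (S M + l)%nat. rewrite !harmonic_S, !S_INR, plus_INR.
    pose proof (pos_INR M). pose proof (pos_INR l). field. lra.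
Qed.

Lemma digamma_INR_S l : digamma (INR l + 1) = - euler_gamma + harmonic l.
Proof.
  unfold digamma. f_equal. apply series_sum_eq, is_series_Reals.
  change (is_lim_seq (sum_n (fun j => / (INR j + 1) - / (INR j + (INR l + 1)))) (harmonic l)).
  apply (is_lim_seq_ext (fun N => harmonic l - (harmonic (S N + l) - harmonic (S N)))).
  { intro N. rewrite sum_n_rsum. symmetry. apply digamma_partial_sum. }
  replace (Finite (harmonic l)) with (Rbar_minus (harmonic l) 0) by (simpl; f_equal; ring).
  apply is_lim_seq_minus'; [apply is_lim_seq_const|].
  apply (is_lim_seq_le_le (fun _ => 0) _ (fun N => INR l * / INR (S (S N)))).
  - intro N. apply harmonic_add_le.
  - apply is_lim_seq_const.
  - replace (Finite 0) with (Rbar_mult (INR l) 0) by (simpl; f_equal; ring).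
    apply is_lim_seq_scal_l. apply (is_lim_seq_incr_1 (fun N => / INR (S N))), is_lim_seq_inv_S.
Qed.

Definition entire (a : nat -> R) : Prop := CV_radius a = p_infty.

Lemma entire_lt_CV_radius a x : entire a -> Rbar_lt (Rabs x) (CV_radius a).
Proof. intro H. rewrite H. exact I. Qed.

Lemma entire_of_ratio (a : nat -> R) C :
  (forall n, a n <> 0) -> (forall n, Rabs (a (S n) / a n) <= C / INR (S n)) -> entire a.
Proof.
  intros Hn H. apply CV_radius_infinite_DAlembert; auto.
  apply (is_lim_seq_le_le (fun _ => 0) _ (fun n => C * / INR (S n))).
  - intro n. split; [apply Rabs_pos | apply H].
  - apply is_lim_seq_const.
  - replace (Finite 0) with (Rbar_mult C 0) by (simpl; f_equal; ring).
    apply is_lim_seq_scal_l, is_lim_seq_inv_S.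
Qed.

Lemma entire_PS_derive a : entire a -> entire (PS_derive a).
Proof. intro H. unfold entire. now rewrite CV_radius_derive. Qed.

Lemma entire_ex_pseries a x : entire a -> ex_pseries a x.
Proof. intro H. now apply CV_radius_inside, entire_lt_CV_radius. Qed.

Lemma entire_ex_series_Rabs a x : entire a -> ex_series (fun n => Rabs (a n * x ^ n)).
Proof. intro H. now apply CV_disk_inside, entire_lt_CV_radius. Qed.

Lemma infinite_sum_PSeries a x :
  entire a -> infinite_sum (fun l => a l * x ^ l) (PSeries a x).
Proof.
  intro H. apply is_series_Reals. apply (is_series_ext (fun l => scal (pow_n x l) (a l))).
  - intro l. rewrite pow_n_pow. apply Rmult_comm.
  - now apply PSeries_correct, entire_ex_pseries.
Qed.

Lemma INR_fact_pos n : 0 < INR (fact n).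
Proof. apply lt_0_INR, lt_O_fact. Qed.

Definition bessel_coef (k l : nat) : R := (-1) ^ l / (INR (fact l) * INR (fact (k + l))).

Definition bessel_log_coef (k l : nat) : R :=
  bessel_coef k l * (harmonic l + harmonic (k + l)).

Lemma bessel_coef_neq0 k l : bessel_coef k l <> 0.
Proof.
  unfold bessel_coef. pose proof (INR_fact_pos l). pose proof (INR_fact_pos (k + l)).
  apply Rmult_integral_contrapositive. split.
  - apply pow_nonzero. lra.
  - apply Rinv_neq_0_compat. nra.
Qed.

Lemma bessel_coef_S k l :
  INR (S l) * INR (S (k + l)) * bessel_coef k (S l) = - bessel_coef k l.
Proof.
  unfold bessel_coef. rewrite Nat.add_succ_r, !fact_simpl, !mult_INR. simpl pow.
  pose proof (INR_fact_pos l). pose proof (INR_fact_pos (k + l)).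
  field. repeat split; try lra; apply not_0_INR; lia.
Qed.

Lemma bessel_coef_ratio k l : Rabs (bessel_coef k (S l) / bessel_coef k l) <= 1 / INR (S l).
Proof.
  pose proof (bessel_coef_neq0 k l). pose proof (bessel_coef_S k l).
  assert (HSl : 0 < INR (S l)) by (apply lt_0_INR; lia).
  assert (HSkl : 1 <= INR (S (k + l))) by (apply (le_INR 1); lia).
  replace (bessel_coef k (S l) / bessel_coef k l) with (- / (INR (S l) * INR (S (k + l)))).
  2: { apply (Rmult_eq_reg_l (INR (S l) * INR (S (k + l)) * bessel_coef k l)).
       - field_simplify; [nra| nra | lra]. 
       - apply Rmult_integral_contrapositive; split; [nra | auto]. }
  rewrite Rabs_Ropp, Rabs_right by (apply Rle_ge, Rlt_le, Rinv_0_lt_compat; nra).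
  unfold Rdiv. rewrite Rmult_1_l. apply Rinv_le_contravar; nra.
Qed.

Lemma bessel_log_coef_neq0 k l : (1 <= k)%nat -> bessel_log_coef k l <> 0.
Proof.
  intro Hk. unfold bessel_log_coef. apply Rmult_integral_contrapositive.
  split; [apply bessel_coef_neq0|].
  pose proof (harmonic_ge0 l). pose proof (harmonic_ge1 (k + l) ltac:(lia)). lra.
Qed.

(* The harmonic weights grow by a factor at most [3] in one step, since [H_l + H_{k+l} >= 1]. *)
Lemma bessel_log_coef_ratio k l : (1 <= k)%nat ->
  Rabs (bessel_log_coef k (S l) / bessel_log_coef k l) <= 3 / INR (S l).
Proof.
  intro Hk. unfold bessel_log_coef.
  pose proof (harmonic_ge0 l). pose proof (harmonic_ge1 (k + l) ltac:(lia)).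
  pose proof (bessel_coef_neq0 k l).
  set (h := harmonic l + harmonic (k + l)).
  set (h' := harmonic (S l) + harmonic (k + S l)).
  assert (Hh' : 0 <= h' / h <= 3).
  { unfold h', h. rewrite Nat.add_succ_r, !harmonic_S.
    pose proof (inv_INR_S_le1 l). pose proof (inv_INR_S_le1 (k + l)).
    pose proof (inv_INR_S_pos l). pose proof (inv_INR_S_pos (k + l)).
    split; [apply Rdiv_le_0_compat; lra|].
    apply Rle_div_l; lra. }
  replace (bessel_coef k (S l) * h' / (bessel_coef k l * h))
    with (bessel_coef k (S l) / bessel_coef k l * (h' / h)) by (field; unfold h; split; lra).
  rewrite Rabs_mult, (Rabs_right (h' / h)) by lra.
  pose proof (bessel_coef_ratio k l). pose proof (Rabs_pos (bessel_coef k (S l) / bessel_coef k l)).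
  pose proof (inv_INR_S_pos l). unfold Rdiv in *. nra.
Qed.

Lemma entire_bessel_coef k : entire (bessel_coef k).
Proof. apply (entire_of_ratio _ 1); [apply bessel_coef_neq0 | apply bessel_coef_ratio]. Qed.

Lemma entire_bessel_log_coef k : (1 <= k)%nat -> entire (bessel_log_coef k).
Proof.
  intro Hk. apply (entire_of_ratio _ 3); intro l;
    [apply bessel_log_coef_neq0 | apply bessel_log_coef_ratio]; auto.
Qed.

Definition laurent_coef (k r : nat) : R := INR (fact (k - r - 1)) / INR (fact r).

Definition laurent_term (k : nat) (z : R) (r : nat) : R :=
  laurent_coef k r * (z / 2) ^ (2 * r) / (z / 2) ^ k.

Lemma pow_add_double (s : R) k l : s ^ (k + 2 * l) = s ^ k * (s ^ 2) ^ l.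
Proof. now rewrite pow_add, pow_mult. Qed.

Lemma besselJ_PSeries k z :
  besselJ k z = (z / 2) ^ k * PSeries (bessel_coef k) ((z / 2) ^ 2).
Proof.
  apply series_sum_eq.
  eapply infinite_sum_ext; [|apply infinite_sum_scal, infinite_sum_PSeries, entire_bessel_coef].
  intro l. cbv beta. rewrite pow_add_double. unfold bessel_coef.
  field. split; apply not_0_INR, fact_neq_0.
Qed.

Section BesselSeries.
Variable k : nat.
Hypothesis Hk : (1 <= k)%nat.

Definition harmonic_series (h : nat -> R) (w : R) : R :=
  Series (fun l => bessel_coef k l * h l * w ^ l).

Lemma infinite_sum_harmonic_series (h : nat -> R) w :
  (forall l, 0 <= h l <= harmonic l + harmonic (k + l)) ->
  infinite_sum (fun l => bessel_coef k l * h l * w ^ l) (harmonic_series h w).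
Proof.
  intro Hh. apply infinite_sum_Series.
  apply (ex_series_Rabs_le _ (fun l => Rabs (bessel_log_coef k l * w ^ l))).
  - intro l. unfold bessel_log_coef. rewrite !Rabs_mult.
    specialize (Hh l).
    rewrite (Rabs_right (h l)), (Rabs_right (_ + _)) by lra.
    pose proof (Rabs_pos (bessel_coef k l)). pose proof (Rabs_pos (w ^ l)).
    apply Rmult_le_compat_r, Rmult_le_compat_l; lra.
  - now apply entire_ex_series_Rabs, entire_bessel_log_coef.
Qed.

Let harmonic_lo := harmonic_series harmonic.
Let harmonic_hi := harmonic_series (fun l => harmonic (k + l)).

Lemma infinite_sum_harmonic_lo w :
  infinite_sum (fun l => bessel_coef k l * harmonic l * w ^ l) (harmonic_lo w).
Proof.
  apply infinite_sum_harmonic_series. intro l.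
  pose proof (harmonic_ge0 l). pose proof (harmonic_ge0 (k + l)). lra.
Qed.

Lemma infinite_sum_harmonic_hi w :
  infinite_sum (fun l => bessel_coef k l * harmonic (k + l) * w ^ l) (harmonic_hi w).
Proof.
  apply infinite_sum_harmonic_series. intro l.
  pose proof (harmonic_ge0 l). pose proof (harmonic_ge0 (k + l)). lra.
Qed.

Lemma PSeries_bessel_log_coef w :
  PSeries (bessel_log_coef k) w = harmonic_lo w + harmonic_hi w.
Proof.
  apply (uniqueness_sum (fun l => bessel_log_coef k l * w ^ l)).
  - now apply infinite_sum_PSeries, entire_bessel_log_coef.
  - eapply infinite_sum_ext;
      [|apply infinite_sum_plus; [apply infinite_sum_harmonic_lo | apply infinite_sum_harmonic_hi]].
    intro l. unfold bessel_log_coef. ring.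
Qed.

Lemma Q_fun_series z : Q_fun k z = (z / 2) ^ k * harmonic_hi ((z / 2) ^ 2).
Proof.
  apply series_sum_eq.
  eapply infinite_sum_ext; [|apply infinite_sum_scal, infinite_sum_harmonic_hi].
  intro l. cbv beta. rewrite pow_add_double, digamma_INR_S. unfold bessel_coef.
  field. split; apply not_0_INR, fact_neq_0.
Qed.

Lemma P_fun_series z :
  P_fun k z = - rsum_range (laurent_term k z) ((k + 1) / 2) (k - 1)
              + (z / 2) ^ k * (harmonic_hi ((z / 2) ^ 2) - harmonic_lo ((z / 2) ^ 2)).
Proof.
  unfold P_fun. f_equal. apply series_sum_eq.
  eapply infinite_sum_ext;
    [|apply infinite_sum_scal, infinite_sum_minus;
      [apply infinite_sum_harmonic_hi | apply infinite_sum_harmonic_lo]].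
  intro l. cbv beta. rewrite pow_add_double, !digamma_INR_S. unfold bessel_coef.
  field. split; apply not_0_INR, fact_neq_0.
Qed.

Lemma besselY_series z :
  besselY k z =
  - / PI * rsum (laurent_term k z) k
  + 2 / PI * ln (z / 2) * ((z / 2) ^ k * PSeries (bessel_coef k) ((z / 2) ^ 2))
  - / PI * ((z / 2) ^ k * (PSeries (bessel_log_coef k) ((z / 2) ^ 2)
                           - 2 * euler_gamma * PSeries (bessel_coef k) ((z / 2) ^ 2))).
Proof.
  unfold besselY. rewrite besselJ_PSeries. f_equal. f_equal. apply series_sum_eq.
  rewrite PSeries_bessel_log_coef.
  eapply infinite_sum_ext.
  2: { apply infinite_sum_scal, infinite_sum_minus.
       - apply infinite_sum_plus; [apply infinite_sum_harmonic_lo | apply infinite_sum_harmonic_hi].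
       - apply infinite_sum_scal, infinite_sum_PSeries, entire_bessel_coef. }
  intro l. cbv beta. rewrite pow_add_double, !digamma_INR_S. unfold bessel_coef.
  field. split; apply not_0_INR, fact_neq_0.
Qed.

End BesselSeries.

Lemma rsum_ext f g n : (forall i, (i < n)%nat -> f i = g i) -> rsum f n = rsum g n.
Proof.
  induction n as [|n IH]; intro H; simpl; auto.
  rewrite IH; [|intros; apply H; lia]. rewrite H; auto.
Qed.

Lemma rsum_add f a b : rsum f (a + b) = rsum f a + rsum (fun i => f (a + i)%nat) b.
Proof.
  induction b as [|b IH]; simpl.
  - rewrite Nat.add_0_r. ring.
  - rewrite Nat.add_succ_r. simpl. rewrite IH. ring.
Qed.

Lemma rsum_rev f n : rsum f n = rsum (fun i => f (n - 1 - i)%nat) n.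
Proof.
  induction n as [|n IH]; [reflexivity|].
  change (rsum f n + f n = rsum (fun i => f (S n - 1 - i)%nat) (1 + n)).
  rewrite rsum_add, IH. simpl. replace (n - 0 - 0)%nat with n by lia.
  rewrite Rplus_0_l, Rplus_comm. f_equal. apply rsum_ext. intros. f_equal. lia.
Qed.

Lemma rsum_scal c f n : rsum (fun i => c * f i) n = c * rsum f n.
Proof. induction n as [|n IH]; simpl; [ring|]. rewrite IH. ring. Qed.

Lemma rsum_Rabs_le f g N :
  (forall i, (i < N)%nat -> Rabs (f i) <= g i) -> Rabs (rsum f N) <= rsum g N.
Proof.
  induction N as [|N IH]; intro H; simpl; [rewrite Rabs_R0; lra|].
  eapply Rle_trans; [apply Rabs_triang|].
  apply Rplus_le_compat; [apply IH; intros; apply H; lia | apply H; lia].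
Qed.

(* The Laurent parts of [P_{2n}] and [Y_{2n}] cancel except for their first [n] terms. *)
Lemma bessel_PQ_combination n z : (1 <= n)%nat -> 0 < z ->
  2 * (euler_gamma + ln (z / 2)) * besselJ (2 * n) z + P_fun (2 * n) z - 2 * Q_fun (2 * n) z
  = PI * besselY (2 * n) z + rsum (laurent_term (2 * n) z) n.
Proof.
  intros Hn Hz. assert (Hk : (1 <= 2 * n)%nat) by lia.
  rewrite (besselY_series _ Hk), besselJ_PSeries, (Q_fun_series _ Hk), (P_fun_series _ Hk),
    (PSeries_bessel_log_coef _ Hk).
  assert (Hhalf : ((2 * n + 1) / 2 = n)%nat).
  { rewrite Nat.add_comm. apply (Nat.add_b2n_double_div2 true). }
  unfold rsum_range. rewrite Hhalf. replace (S (2 * n - 1) - n)%nat with n by lia.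
  replace (rsum (laurent_term (2 * n) z) (2 * n)) with (rsum (laurent_term (2 * n) z) (n + n))
    by (f_equal; lia).
  rewrite rsum_add.
  pose proof PI_RGT_0. field. lra.
Qed.

Definition A_coef (n : nat) (t : R) : R :=
  rsum (fun r => INR (fact (n + r)) / INR (fact (n - r - 1)) / t ^ (2 * r + 2)) n.

Lemma laurent_sum_A_coef n t : (1 <= n)%nat -> 0 < t ->
  rsum (laurent_term (2 * n) (2 * t)) n = A_coef n t.
Proof.
  intros Hn Ht. unfold A_coef. rewrite rsum_rev. apply rsum_ext. intros i Hi.
  unfold laurent_term, laurent_coef.
  replace (2 * t / 2) with t by field.
  replace (2 * n - (n - 1 - i) - 1)%nat with (n + i)%nat by lia.
  replace (n - 1 - i)%nat with (n - i - 1)%nat by lia.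
  replace (t ^ (2 * n)) with (t ^ (2 * (n - i - 1)) * t ^ (2 * i + 2))
    by (rewrite <- pow_add; f_equal; lia).
  assert (0 < t ^ (2 * (n - i - 1))) by (apply pow_lt; lra).
  assert (0 < t ^ (2 * i + 2)) by (apply pow_lt; lra).
  field. repeat split; try lra; apply not_0_INR, fact_neq_0.
Qed.

Lemma A_coef_bound n :
  exists K, forall m, Rabs (A_coef n (2 * PI * INR (S m))) <= K * / INR (S m) ^ 2.
Proof.
  exists (rsum (fun r => INR (fact (n + r)) / INR (fact (n - r - 1))) n). intro m.
  assert (Hm : 1 <= INR (S m)) by (apply (le_INR 1); lia).
  assert (Ht : INR (S m) <= 2 * PI * INR (S m)) by (pose proof PI2_1; nra).
  unfold A_coef. rewrite (Rmult_comm (rsum _ _)), <- rsum_scal. apply rsum_Rabs_le. intros r _.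
  pose proof (INR_fact_pos (n + r)). pose proof (INR_fact_pos (n - r - 1)).
  assert (Hpow : INR (S m) ^ 2 <= (2 * PI * INR (S m)) ^ (2 * r + 2)).
  { replace (2 * r + 2)%nat with (2 + 2 * r)%nat by lia. rewrite pow_add.
    rewrite <- (Rmult_1_r (INR (S m) ^ 2)). apply Rmult_le_compat.
    - apply pow_le; lra.
    - lra.
    - apply pow_incr; lra.
    - apply pow_R1_Rle. pose proof PI2_1. nra. }
  rewrite Rabs_right.
  2: { apply Rle_ge. unfold Rdiv. apply Rmult_le_pos;
       [apply Rmult_le_pos; [lra | left; apply Rinv_0_lt_compat; lra]
       | left; apply Rinv_0_lt_compat, pow_lt; nra]. }
  unfold Rdiv. rewrite (Rmult_comm (/ _) (_ * _)). apply Rmult_le_compat_l.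
  - apply Rmult_le_pos; [lra | left; apply Rinv_0_lt_compat; lra].
  - apply Rinv_le_contravar; [apply pow_lt; lra | exact Hpow].
Qed.

Lemma ex_series_A_coef_cos n x :
  ex_series (fun m => A_coef n (2 * PI * INR (S m)) * cos (2 * PI * INR (S m) * x)).
Proof.
  destruct (A_coef_bound n) as [K HK].
  apply (ex_series_Rabs_le _ (fun m => K * / INR (S m) ^ 2)).
  - intro m. rewrite Rabs_mult.
    assert (Rabs (cos (2 * PI * INR (S m) * x)) <= 1) by (apply Rabs_le, COS_bound).
    pose proof (HK m). pose proof (Rabs_pos (A_coef n (2 * PI * INR (S m)))).
    pose proof (Rabs_pos (cos (2 * PI * INR (S m) * x))). nra.
  - apply (ex_series_scal_l K (fun m => / INR (S m) ^ 2)), ex_series_inv_sq.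
Qed.

Lemma lemma3p1_of_Y_series n x S1 : (1 <= n)%nat ->
  infinite_sum (fun m => besselY (2 * n) (4 * PI * INR (S m)) * cos (2 * PI * INR (S m) * x)) S1 ->
  exists S2 : R,
    infinite_sum (fun m =>
        (2 * (euler_gamma + ln (2 * PI * INR (S m))) * besselJ (2 * n) (4 * PI * INR (S m))
         + P_fun (2 * n) (4 * PI * INR (S m))
         - 2 * Q_fun (2 * n) (4 * PI * INR (S m)))
        * cos (2 * PI * INR (S m) * x)) S2 /\
    infinite_sum (fun m => A_term n x (S m))
      ((-1) ^ n * PI * S1 + (-1) ^ (n + 1) * S2).
Proof.
  intros Hn HY.
  set (B := Series (fun m => A_coef n (2 * PI * INR (S m)) * cos (2 * PI * INR (S m) * x))).
  assert (HB := infinite_sum_Series _ (ex_series_A_coef_cos n x)). fold B in HB.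
  exists (PI * S1 + B). split.
  - eapply infinite_sum_ext; [|exact (infinite_sum_plus _ _ _ _ (infinite_sum_scal _ _ PI HY) HB)].
    intro m. cbv beta.
    assert (Ht : 0 < 2 * PI * INR (S m)) by (pose proof PI_RGT_0; pose proof (lt_0_INR (S m) ltac:(lia)); nra).
    replace (4 * PI * INR (S m)) with (2 * (2 * PI * INR (S m))) by ring.
    set (t := 2 * PI * INR (S m)) in *.
    replace (ln t) with (ln (2 * t / 2)) by (f_equal; field).
    rewrite bessel_PQ_combination, laurent_sum_A_coef by (lia || lra). ring.
  - replace ((-1) ^ n * PI * S1 + (-1) ^ (n + 1) * (PI * S1 + B)) with ((-1) ^ (n + 1) * B)
      by (rewrite pow_add; ring).
    eapply infinite_sum_ext; [|exact (infinite_sum_scal _ _ ((-1) ^ (n + 1)) HB)].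
    intro m. unfold A_term, A_coef. ring.
Qed.

Lemma PSeries_bessel_operator a c w : entire a ->
  w * PSeries (PS_derive (PS_derive a)) w + c * PSeries (PS_derive a) w + PSeries a w
  = PSeries (fun n => INR (S n) * (INR n + c) * a (S n) + a n) w.
Proof.
  intro Ha. pose proof (entire_PS_derive _ Ha) as Ha'. pose proof (entire_PS_derive _ Ha') as Ha''.
  rewrite <- PSeries_incr_1, <- PSeries_scal, <- !PSeries_plus.
  - apply PSeries_ext. intros [|n];
      unfold PS_plus, PS_scal, PS_incr_1, PS_derive, plus, scal, mult; cbn -[INR];
      rewrite ?S_INR, ?INR_0; ring.
  - apply ex_pseries_plus; [apply ex_pseries_incr_1, entire_ex_pseries; auto|].
    apply ex_pseries_scal; [apply Rmult_comm | apply entire_ex_pseries; auto].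
  - now apply entire_ex_pseries.
  - apply ex_pseries_incr_1, entire_ex_pseries; auto.
  - apply ex_pseries_scal; [apply Rmult_comm | apply entire_ex_pseries; auto].
Qed.

Lemma PSeries_bessel_coef_ode k w :
  w * PSeries (PS_derive (PS_derive (bessel_coef k))) w
  + (INR k + 1) * PSeries (PS_derive (bessel_coef k)) w + PSeries (bessel_coef k) w = 0.
Proof.
  rewrite PSeries_bessel_operator by apply entire_bessel_coef.
  rewrite <- (PSeries_const_0 w). apply PSeries_ext. intro n.
  replace (bessel_coef k n) with (- (INR (S n) * INR (S (k + n)) * bessel_coef k (S n)))
    by (rewrite bessel_coef_S; ring).
  rewrite !S_INR, plus_INR. ring.
Qed.

Lemma bessel_log_coef_step k n :
  INR (S n) * (INR n + (INR k + 1)) * bessel_log_coef k (S n) + bessel_log_coef k n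
  = (INR k + 2 * INR (S n)) * bessel_coef k (S n).
Proof.
  unfold bessel_log_coef.
  replace (bessel_coef k n) with (- (INR (S n) * INR (S (k + n)) * bessel_coef k (S n)))
    by (rewrite bessel_coef_S; ring).
  rewrite Nat.add_succ_r, !harmonic_S, !S_INR, plus_INR.
  pose proof (pos_INR n). pose proof (pos_INR k). field. lra.
Qed.

Lemma PSeries_bessel_log_coef_ode k w : (1 <= k)%nat ->
  w * (w * PSeries (PS_derive (PS_derive (bessel_log_coef k))) w
       + (INR k + 1) * PSeries (PS_derive (bessel_log_coef k)) w + PSeries (bessel_log_coef k) w)
  = INR k * PSeries (bessel_coef k) w + 2 * w * PSeries (PS_derive (bessel_coef k)) w
    - / INR (fact (k - 1)).
Proof.
  intro Hk. set (c := bessel_coef k).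
  assert (Hc := entire_bessel_coef k). fold c in Hc.
  set (e := PS_plus (PS_scal (INR k) c) (PS_scal 2 (PS_incr_1 (PS_derive c)))).
  assert (He : ex_pseries e w).
  { apply ex_pseries_plus; apply ex_pseries_scal; try apply Rmult_comm.
    - now apply entire_ex_pseries.
    - now apply ex_pseries_incr_1, entire_ex_pseries, entire_PS_derive. }
  assert (Ee : INR k * PSeries c w + 2 * w * PSeries (PS_derive c) w = PSeries e w).
  { unfold e. rewrite PSeries_plus, !PSeries_scal, PSeries_incr_1; [ring| |].
    - apply ex_pseries_scal; [apply Rmult_comm | now apply entire_ex_pseries].
    - apply ex_pseries_scal; [apply Rmult_comm |].
      now apply ex_pseries_incr_1, entire_ex_pseries, entire_PS_derive. }
  rewrite Ee, (PSeries_decr_1 e w He), PSeries_bessel_operator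
    by now apply entire_bessel_log_coef.
  replace (e 0%nat) with (INR k / INR (fact k)).
  2: { unfold e, c, bessel_coef, PS_plus, PS_scal, PS_incr_1, plus, scal, mult; cbn -[INR fact].
       rewrite Nat.add_0_r. simpl fact. simpl INR. field. apply not_0_INR, fact_neq_0. }
  replace (INR k / INR (fact k)) with (/ INR (fact (k - 1))).
  2: { assert (Ef : INR (fact k) = INR k * INR (fact (k - 1))).
       { destruct k as [|j]; [lia|]. rewrite fact_simpl, mult_INR.
         now replace (S j - 1)%nat with j by lia. }
       rewrite Ef. pose proof (INR_fact_pos (k - 1)).
       field. split; [lra|]. apply not_0_INR; lia. }
  rewrite (PSeries_ext _ (PS_decr_1 e)); [ring|].
  intro n. rewrite bessel_log_coef_step.
  unfold e, c, PS_decr_1, PS_plus, PS_scal, PS_incr_1, PS_derive, plus, scal, mult; cbn -[INR].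
  ring.
Qed.

Definition is_derive2 (g g1 g2 : R -> R) : Prop :=
  forall w, is_derive g w (g1 w) /\ is_derive g1 w (g2 w).

Definition is_derive2_pos (f f1 f2 : R -> R) : Prop :=
  forall s, 0 < s -> is_derive f s (f1 s) /\ is_derive f1 s (f2 s).

(* Bessel's operator of order [k] in the variable [s = z / 2], in which the series
   of [J_k] and [Y_k] are series in [s ^ 2]. *)
Definition bessel_op (k : nat) (f f1 f2 : R -> R) (s : R) : R :=
  s ^ 2 * f2 s + s * f1 s + (4 * s ^ 2 - INR k ^ 2) * f s.

Definition has_bessel_image (k : nat) (f v : R -> R) : Prop :=
  exists f1 f2, is_derive2_pos f f1 f2 /\ forall s, 0 < s -> bessel_op k f f1 f2 s = v s.

Lemma is_derive2_PSeries a : entire a ->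
  is_derive2 (PSeries a) (PSeries (PS_derive a)) (PSeries (PS_derive (PS_derive a))).
Proof.
  intros Ha w. split; apply is_derive_PSeries, entire_lt_CV_radius; auto.
  now apply entire_PS_derive.
Qed.

Lemma is_derive2_pos_power_sq p g g1 g2 : is_derive2 g g1 g2 ->
  is_derive2_pos (fun s => Rpower s p * g (s ^ 2))
    (fun s => Rpower s p * (p / s * g (s ^ 2) + 2 * s * g1 (s ^ 2)))
    (fun s => Rpower s p * ((p * p - p) / s ^ 2 * g (s ^ 2) + (4 * p + 2) * g1 (s ^ 2)
                            + 4 * s ^ 2 * g2 (s ^ 2))).
Proof.
  intros Hg s Hs.
  assert (D1 : forall w, ex_derive g w) by (intro w; eexists; apply Hg).
  assert (D2 : forall w, ex_derive g1 w) by (intro w; eexists; apply Hg).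
  assert (E1 : forall w, Derive (fun x => g x) w = g1 w) by (intro w; apply is_derive_unique, Hg).
  assert (E2 : forall w, Derive (fun x => g1 x) w = g2 w) by (intro w; apply is_derive_unique, Hg).
  unfold Rpower. split; auto_derive.
  all: try (repeat split; auto; lra).
  all: rewrite ?E1, ?E2; replace (s * (s * 1)) with (s ^ 2) by ring.
  all: field; lra.
Qed.

Lemma is_derive2_pos_ln_mul f f1 f2 : is_derive2_pos f f1 f2 ->
  is_derive2_pos (fun s => ln s * f s) (fun s => f s / s + ln s * f1 s)
    (fun s => - f s / s ^ 2 + 2 * f1 s / s + ln s * f2 s).
Proof.
  intros Hf s Hs. destruct (Hf s Hs) as [H1 H2].
  assert (E1 : ex_derive f s) by (eexists; eauto).
  assert (E2 : ex_derive f1 s) by (eexists; eauto).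
  assert (D1 : Derive (fun x => f x) s = f1 s) by now apply is_derive_unique.
  assert (D2 : Derive (fun x => f1 x) s = f2 s) by now apply is_derive_unique.
  split; auto_derive.
  all: try (repeat split; auto; lra).
  all: rewrite ?D1, ?D2; field; lra.
Qed.

Lemma has_bessel_image_ext k f v w :
  (forall s, 0 < s -> v s = w s) -> has_bessel_image k f v -> has_bessel_image k f w.
Proof.
  intros Hvw [f1 [f2 [Hd Hv]]]. exists f1, f2. split; auto.
  intros s Hs. rewrite Hv by auto. auto.
Qed.

Lemma has_bessel_image_plus k f g v w :
  has_bessel_image k f v -> has_bessel_image k g w ->
  has_bessel_image k (fun s => f s + g s) (fun s => v s + w s).
Proof.
  intros [f1 [f2 [Hf Hv]]] [g1 [g2 [Hg Hw]]].
  exists (fun s => f1 s + g1 s), (fun s => f2 s + g2 s). split.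
  - intros s Hs. destruct (Hf s Hs), (Hg s Hs).
    split; [apply (is_derive_plus f g) | apply (is_derive_plus f1 g1)]; auto.
  - intros s Hs. rewrite <- Hv, <- Hw by auto. unfold bessel_op. ring.
Qed.

Lemma has_bessel_image_scal k c f v :
  has_bessel_image k f v -> has_bessel_image k (fun s => c * f s) (fun s => c * v s).
Proof.
  intros [f1 [f2 [Hf Hv]]]. exists (fun s => c * f1 s), (fun s => c * f2 s). split.
  - intros s Hs. destruct (Hf s Hs). split; apply is_derive_scal; auto.
  - intros s Hs. rewrite <- Hv by auto. unfold bessel_op. ring.
Qed.

Lemma has_bessel_image_rsum k (F V : nat -> R -> R) N :
  (forall r, has_bessel_image k (F r) (V r)) ->
  has_bessel_image k (fun s => rsum (fun r => F r s) N) (fun s => rsum (fun r => V r s) N).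
Proof.
  intro H. induction N as [|N IH]; simpl.
  - exists (fun _ => 0), (fun _ => 0). split.
    + intros s _. split; apply (is_derive_const 0).
    + intros s _. unfold bessel_op. ring.
  - apply has_bessel_image_plus; auto.
Qed.

Lemma has_bessel_image_power k p :
  has_bessel_image k (fun s => Rpower s p)
    (fun s => Rpower s p * (p ^ 2 - INR k ^ 2 + 4 * s ^ 2)).
Proof.
  exists (fun s => p / s * Rpower s p), (fun s => (p * p - p) / s ^ 2 * Rpower s p). split.
  - intros s Hs. unfold Rpower. split; auto_derive; try lra; field; lra.
  - intros s Hs. unfold bessel_op. field. lra.
Qed.

Lemma has_bessel_image_power_sq k p g g1 g2 : is_derive2 g g1 g2 ->
  has_bessel_image k (fun s => Rpower s p * g (s ^ 2))
    (fun s => Rpower s p * ((p ^ 2 - INR k ^ 2) * g (s ^ 2)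
              + 4 * s ^ 2 * (s ^ 2 * g2 (s ^ 2) + (p + 1) * g1 (s ^ 2) + g (s ^ 2)))).
Proof.
  intro Hg. eexists _, _. split; [exact (is_derive2_pos_power_sq p g g1 g2 Hg)|].
  intros s Hs. unfold bessel_op. field. lra.
Qed.

Lemma has_bessel_image_ln_power_sq k p g g1 g2 : is_derive2 g g1 g2 ->
  has_bessel_image k (fun s => ln s * (Rpower s p * g (s ^ 2)))
    (fun s => ln s * (Rpower s p * ((p ^ 2 - INR k ^ 2) * g (s ^ 2)
              + 4 * s ^ 2 * (s ^ 2 * g2 (s ^ 2) + (p + 1) * g1 (s ^ 2) + g (s ^ 2))))
              + 2 * Rpower s p * (p * g (s ^ 2) + 2 * s ^ 2 * g1 (s ^ 2))).
Proof.
  intro Hg. eexists _, _.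
  split; [exact (is_derive2_pos_ln_mul _ _ _ (is_derive2_pos_power_sq p g g1 g2 Hg))|].
  intros s Hs. unfold bessel_op. field. lra.
Qed.

Definition laurent_power (k r : nat) : R := INR (2 * r) - INR k.

Definition laurent_part (k : nat) (s : R) : R :=
  rsum (fun r => laurent_coef k r * Rpower s (laurent_power k r)) k.

Definition besselY_half (k : nat) (s : R) : R :=
  - / PI * laurent_part k s
  + 2 / PI * (ln s * (Rpower s (INR k) * PSeries (bessel_coef k) (s ^ 2)))
  + - / PI * (Rpower s (INR k) * PSeries (bessel_log_coef k) (s ^ 2))
  + 2 * euler_gamma / PI * (Rpower s (INR k) * PSeries (bessel_coef k) (s ^ 2)).

Lemma besselY_double k s : (1 <= k)%nat -> 0 < s -> besselY k (2 * s) = besselY_half k s.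
Proof.
  intros Hk Hs. rewrite (besselY_series k Hk). unfold besselY_half, laurent_part.
  replace (2 * s / 2) with s by field. rewrite Rpower_pow by auto.
  rewrite (rsum_ext (fun r => laurent_coef k r * Rpower s (INR (2 * r) - INR k))
                    (laurent_term k (2 * s))); [pose proof PI_RGT_0; field; lra|].
  intros r _. unfold laurent_term, laurent_power. replace (2 * s / 2) with s by field.
  unfold Rminus. rewrite Rpower_plus, Rpower_Ropp, !Rpower_pow by auto.
  field. apply pow_nonzero. lra.
Qed.

Lemma laurent_coef_step k r : (1 <= r)%nat -> (r < k)%nat ->
  laurent_coef k r * (INR r * INR (k - r)) = laurent_coef k (r - 1).
Proof.
  intros H1 H2. unfold laurent_coef.
  replace (k - (r - 1) - 1)%nat with (S (k - r - 1)) by lia.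
  replace (fact r) with (fact (S (r - 1))) by (f_equal; lia).
  rewrite !fact_simpl, !mult_INR.
  replace (S (r - 1)) with r by lia. replace (S (k - r - 1)) with (k - r)%nat by lia.
  pose proof (INR_fact_pos (r - 1)). pose proof (INR_fact_pos (k - r - 1)).
  field. split; [lra|]. apply not_0_INR; lia.
Qed.

Lemma Rpower_mult_sq s p : 0 < s -> Rpower s p * s ^ 2 = Rpower s (p + 2).
Proof.
  intro Hs. rewrite Rpower_plus. f_equal.
  replace 2 with (INR 2) by (simpl; ring). now rewrite Rpower_pow.
Qed.

Lemma laurent_telescope k s N : 0 < s -> (1 <= N <= k)%nat ->
  rsum (fun r => laurent_coef k r * (Rpower s (laurent_power k r)
                   * (laurent_power k r ^ 2 - INR k ^ 2 + 4 * s ^ 2))) N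
  = 4 * laurent_coef k (N - 1) * Rpower s (laurent_power k N).
Proof.
  intros Hs [H1 H2]. induction H1 as [|N HN IH]; cbn [rsum].
  - replace (laurent_power k 1) with (laurent_power k 0 + 2)
      by (unfold laurent_power; simpl; ring).
    rewrite <- Rpower_mult_sq by auto.
    replace (laurent_power k 0 ^ 2 - INR k ^ 2) with 0 by (unfold laurent_power; simpl; ring).
    simpl (1 - 1)%nat. ring.
  - rewrite IH by lia.
    replace (laurent_power k (S N)) with (laurent_power k N + 2)
      by (unfold laurent_power; rewrite !mult_INR, (S_INR N); simpl; ring).
    rewrite <- Rpower_mult_sq by auto.
    replace (laurent_power k N ^ 2 - INR k ^ 2) with (-4 * (INR N * INR (k - N))).
    2: { unfold laurent_power. rewrite minus_INR, mult_INR by lia. simpl INR. ring. }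
    replace (S N - 1)%nat with N by lia.
    rewrite <- (laurent_coef_step k N) by lia. ring.
Qed.

Lemma has_bessel_image_laurent_part k : (1 <= k)%nat ->
  has_bessel_image k (laurent_part k) (fun s => 4 / INR (fact (k - 1)) * Rpower s (INR k)).
Proof.
  intro Hk. eapply has_bessel_image_ext.
  2: { apply (has_bessel_image_rsum k (fun r s => laurent_coef k r * Rpower s (laurent_power k r))).
       intro r. apply has_bessel_image_scal, has_bessel_image_power. }
  intros s Hs. cbv beta.
  rewrite laurent_telescope by (auto; lia).
  replace (laurent_power k k) with (INR k) by (unfold laurent_power; rewrite mult_INR; simpl; ring).
  unfold laurent_coef. replace (k - (k - 1) - 1)%nat with 0%nat by lia. simpl. field.
  pose proof (INR_fact_pos (k - 1)). lra.
Qed.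


Lemma has_bessel_image_besselY_half k : (1 <= k)%nat ->
  has_bessel_image k (besselY_half k) (fun _ => 0).
Proof.
  intro Hk. unfold besselY_half. eapply has_bessel_image_ext.
  2: { apply has_bessel_image_plus; [apply has_bessel_image_plus; [apply has_bessel_image_plus|]|];
         apply has_bessel_image_scal.
       - now apply has_bessel_image_laurent_part.
       - apply has_bessel_image_ln_power_sq, is_derive2_PSeries, entire_bessel_coef.
       - now apply has_bessel_image_power_sq, is_derive2_PSeries, entire_bessel_log_coef.
       - apply has_bessel_image_power_sq, is_derive2_PSeries, entire_bessel_coef. }
  intros s Hs. cbv beta. rewrite PSeries_bessel_coef_ode.
  rewrite (Rmult_assoc 4 (s ^ 2) (_ + _ + PSeries (bessel_log_coef k) _)).
  rewrite (PSeries_bessel_log_coef_ode k (s ^ 2) Hk).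
  pose proof PI_RGT_0. pose proof (INR_fact_pos (k - 1)). field. lra.
Qed.

Lemma bessel_equation_of_half k f : has_bessel_image k f (fun _ => 0) ->
  exists y1 y2, forall z, 0 < z ->
    is_derive (fun z => f (z / 2)) z (y1 z) /\ is_derive y1 z (y2 z) /\
    z ^ 2 * y2 z + z * y1 z + (z ^ 2 - INR k ^ 2) * f (z / 2) = 0.
Proof.
  intros [f1 [f2 [Hd Hf]]].
  exists (fun z => / 2 * f1 (z / 2)), (fun z => / 2 * (/ 2 * f2 (z / 2))).
  intros z Hz. assert (Hs : 0 < z / 2) by lra. destruct (Hd _ Hs) as [D1 D2].
  assert (Hhalf : is_derive (fun z : R => z / 2) z (/ 2)) by (auto_derive; auto; field).
  split; [|split].
  - exact (is_derive_comp f (fun z => z / 2) z _ _ D1 Hhalf).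
  - apply is_derive_scal. exact (is_derive_comp f1 (fun z => z / 2) z _ _ D2 Hhalf).
  - rewrite <- (Hf _ Hs). unfold bessel_op. field.
Qed.

Lemma is_derive_nonpos_antitone (f df : R -> R) a b : a <= b ->
  (forall t, a <= t <= b -> is_derive f t (df t)) -> (forall t, a <= t <= b -> df t <= 0) ->
  f b <= f a.
Proof.
  intros Hab Hd Hn.
  destruct (MVT_gen f a b df) as [c [Hc E]].
  - intros t Ht. rewrite Rmin_left, Rmax_right in Ht by lra. apply Hd; lra.
  - intros t Ht. rewrite Rmin_left, Rmax_right in Ht by lra.
    apply continuity_pt_filterlim, (ex_derive_continuous f t). eexists; apply Hd; lra.
  - rewrite Rmin_left, Rmax_right in Hc by lra. pose proof (Hn c Hc). nra.
Qed.

Lemma is_derive_inv_sq_bound (f df : R -> R) z0 D : 0 < z0 ->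
  (forall t, z0 <= t -> is_derive f t (df t) /\ Rabs (df t) <= D / t ^ 2) ->
  forall a b, z0 <= a <= b -> f b + D / b <= f a + D / a /\ f a - D / a <= f b - D / b.
Proof.
  intros Hz0 Hf a b Hab.
  assert (Hinv : forall t, z0 <= t -> is_derive (fun t => D / t) t (- (D / t ^ 2))).
  { intros t Ht. auto_derive; [lra | field; lra]. }
  split.
  - apply (is_derive_nonpos_antitone (fun t => f t + D / t) (fun t => df t - D / t ^ 2)); [lra| |].
    + intros t Ht. apply (is_derive_plus f (fun t => D / t)); [apply Hf | apply Hinv]; lra.
    + intros t Ht. destruct (Hf t ltac:(lra)) as [_ Hb]. apply Rabs_le_between in Hb. lra.
  - cut (- f b + D / b <= - f a + D / a); [lra|].
    apply (is_derive_nonpos_antitone (fun t => - f t + D / t) (fun t => - df t - D / t ^ 2));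
      [lra| |].
    + intros t Ht. apply (is_derive_plus (fun t => - f t) (fun t => D / t));
        [apply (is_derive_opp f) | apply Hinv]; try apply Hf; lra.
    + intros t Ht. destruct (Hf t ltac:(lra)) as [_ Hb]. apply Rabs_le_between in Hb. lra.
Qed.

Lemma bracketed_seq_limit (s e : nat -> R) : (forall m, 0 <= e m) ->
  Un_growing (fun m => s m - e m) -> Un_decreasing (fun m => s m + e m) ->
  exists L, forall m, Rabs (s m - L) <= e m.
Proof.
  intros He Hlo Hhi.
  assert (Hhi' : forall m n, (m <= n)%nat -> s n + e n <= s m + e m).
  { intros m n Hmn. induction Hmn as [|n _ IH]; [lra|]. specialize (Hhi n). simpl in Hhi. lra. }
  destruct (growing_cv _ Hlo) as [L HL].
  { exists (s 0%nat + e 0%nat). intros r [i ->]. pose proof (He i). pose proof (Hhi' 0%nat i ltac:(lia)). lra. }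
  exists L. intro m.
  pose proof (growing_ineq _ L Hlo HL m) as Hlow.
  assert (Hup : L <= s m + e m).
  { destruct (Rle_dec L (s m + e m)) as [|Hgt]; auto. exfalso.
    destruct (HL (L - (s m + e m))) as [N HN]; [lra|].
    specialize (HN (max N m) ltac:(lia)). unfold Rdist in HN. apply Rabs_def2 in HN.
    pose proof (He (max N m)). pose proof (Hhi' m (max N m) ltac:(lia)). lra. }
  apply Rabs_le. simpl in Hlow. lra.
Qed.

Definition lattice (m : nat) : R := 4 * PI * INR (S m).

Lemma lattice_pos m : 0 < lattice m.
Proof. unfold lattice. pose proof PI_RGT_0. pose proof (lt_0_INR (S m) ltac:(lia)). nra. Qed.

Lemma lattice_S m : lattice (S m) = lattice m + 4 * PI.
Proof. unfold lattice. rewrite (S_INR (S m)). ring. Qed.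

Lemma lattice_ge m : 4 * PI <= lattice m.
Proof.
  unfold lattice. pose proof PI_RGT_0. pose proof (le_INR 1 (S m) ltac:(lia)).
  simpl INR in *. nra.
Qed.

Lemma cos_sin_lattice m : cos (lattice m) = 1 /\ sin (lattice m) = 0.
Proof.
  unfold lattice. replace (4 * PI * INR (S m)) with (0 + 2 * INR (2 * S m) * PI)
    by (rewrite mult_INR; simpl; ring).
  now rewrite cos_period, sin_period, cos_0, sin_0.
Qed.

Section LiouvilleAsymptotics.
Variables y y1 y2 : R -> R.
Variable K : R.
Hypothesis Hy : forall z, 0 < z ->
  is_derive y z (y1 z) /\ is_derive y1 z (y2 z) /\ z ^ 2 * y2 z + z * y1 z + (z ^ 2 - K) * y z = 0.

(* Liouville's substitution [u = sqrt z * y] turns Bessel's equation into [u'' = (q - 1) u]. *)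
Definition liouville_q z := (K - / 4) / z ^ 2.
Definition liouville z := sqrt z * y z.
Definition liouville_d1 z := y z / (2 * sqrt z) + sqrt z * y1 z.
Definition liouville_d2 z := (liouville_q z - 1) * liouville z.

Lemma is_derive_liouville z : 0 < z -> is_derive liouville z (liouville_d1 z).
Proof.
  intro Hz. destruct (Hy z Hz) as [H1 _]. unfold liouville, liouville_d1.
  assert (ex_derive y z) by (eexists; eauto).
  assert (D1 : Derive (fun x => y x) z = y1 z) by now apply is_derive_unique.
  auto_derive; [split; auto|]. rewrite D1.
  field. apply Rgt_not_eq, sqrt_lt_R0; auto.
Qed.

Lemma is_derive_liouville_d1 z : 0 < z -> is_derive liouville_d1 z (liouville_d2 z).
Proof.
  intro Hz. destruct (Hy z Hz) as [H1 [H2 H3]].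
  unfold liouville_d1, liouville_d2, liouville, liouville_q.
  assert (ex_derive y z) by (eexists; eauto). assert (ex_derive y1 z) by (eexists; eauto).
  assert (D1 : Derive (fun x => y x) z = y1 z) by now apply is_derive_unique.
  assert (D2 : Derive (fun x => y1 x) z = y2 z) by now apply is_derive_unique.
  assert (Ht : 0 < sqrt z) by (apply sqrt_lt_R0; auto).
  assert (E : y2 z = - (z * y1 z + (z ^ 2 - K) * y z) / z ^ 2).
  { assert (z ^ 2 <> 0) by (apply pow_nonzero; lra).
    apply (Rmult_eq_reg_l (z ^ 2)); auto. field_simplify; lra. }
  auto_derive; [repeat split; auto; lra|]. rewrite D1, D2, E.
  assert (Hzt : z = sqrt z * sqrt z) by (rewrite sqrt_sqrt; lra).
  set (t := sqrt z) in *. rewrite Hzt. field. lra.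
Qed.

Definition liouville_c := Rabs (K - / 4).
Definition energy z := liouville z ^ 2 + liouville_d1 z ^ 2.
Definition damped_energy z := energy z * exp (liouville_c / z).

Lemma Rabs_liouville_q z : 0 < z -> Rabs (liouville_q z) = liouville_c / z ^ 2.
Proof.
  intro Hz. unfold liouville_q, liouville_c, Rdiv.
  rewrite Rabs_mult, Rabs_inv, (Rabs_right (z ^ 2)); auto.
  apply Rle_ge, pow_le. lra.
Qed.

Definition damped_energy_d1 z :=
  exp (liouville_c / z) * (2 * liouville_q z * liouville z * liouville_d1 z
                           - liouville_c / z ^ 2 * energy z).

Lemma is_derive_damped_energy z : 0 < z -> is_derive damped_energy z (damped_energy_d1 z).
Proof.
  intro Hz. pose proof (is_derive_liouville z Hz) as Du.
  pose proof (is_derive_liouville_d1 z Hz) as Du1.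
  unfold damped_energy, damped_energy_d1, energy.
  assert (ex_derive liouville z) by (eexists; eauto).
  assert (ex_derive liouville_d1 z) by (eexists; eauto).
  assert (D1 : Derive (fun x => liouville x) z = liouville_d1 z) by now apply is_derive_unique.
  assert (D2 : Derive (fun x => liouville_d1 x) z = liouville_d2 z) by now apply is_derive_unique.
  auto_derive; [repeat split; auto; lra|]. rewrite D1, D2.
  unfold liouville_d2, Rdiv. field. lra.
Qed.

(* [(u^2 + u'^2)' = 2 q u u' <= (c / z^2) (u^2 + u'^2)], which the factor [exp (c / z)] absorbs. *)
Lemma damped_energy_d1_nonpos z : 0 < z -> damped_energy_d1 z <= 0.
Proof.
  intro Hz. unfold damped_energy_d1.
  assert (0 < exp (liouville_c / z)) by apply exp_pos.
  cut (2 * liouville_q z * liouville z * liouville_d1 z <= liouville_c / z ^ 2 * energy z);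
    [intro; nra|].
  rewrite <- Rabs_liouville_q by auto. unfold energy.
  set (u := liouville z). set (u1 := liouville_d1 z).
  assert (Huu : Rabs (2 * u * u1) <= u ^ 2 + u1 ^ 2).
  { apply Rabs_le. pose proof (pow2_ge_0 (u - u1)). pose proof (pow2_ge_0 (u + u1)). split; nra. }
  pose proof (Rle_abs (liouville_q z * (2 * u * u1))) as Hq. rewrite Rabs_mult in Hq.
  pose proof (Rabs_pos (liouville_q z)). pose proof (Rabs_pos (2 * u * u1)). nra.
Qed.

Lemma energy_bound z0 z : 0 < z0 <= z -> energy z <= damped_energy z0.
Proof.
  intro Hz.
  assert (damped_energy z <= damped_energy z0).
  { apply (is_derive_nonpos_antitone _ damped_energy_d1); [lra | |]; intros t Ht;
      [apply is_derive_damped_energy | apply damped_energy_d1_nonpos]; lra. }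
  unfold damped_energy in *.
  assert (0 <= liouville_c / z) by (apply Rdiv_le_0_compat; [apply Rabs_pos | lra]).
  pose proof (exp_ineq1_le (liouville_c / z)).
  assert (0 <= energy z) by (unfold energy; nra). nra.
Qed.

Definition cos_coef z := liouville z * cos z - liouville_d1 z * sin z.

Lemma is_derive_cos_coef z : 0 < z ->
  is_derive cos_coef z (- (liouville_q z * liouville z) * sin z).
Proof.
  intro Hz. pose proof (is_derive_liouville z Hz) as Du.
  pose proof (is_derive_liouville_d1 z Hz) as Du1. unfold cos_coef.
  assert (ex_derive liouville z) by (eexists; eauto).
  assert (ex_derive liouville_d1 z) by (eexists; eauto).
  assert (D1 : Derive (fun x => liouville x) z = liouville_d1 z) by now apply is_derive_unique.
  assert (D2 : Derive (fun x => liouville_d1 x) z = liouville_d2 z) by now apply is_derive_unique.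
  auto_derive; [repeat split; auto|]. rewrite D1, D2. unfold liouville_d2. ring.
Qed.

Lemma cos_coef_derive_bound z0 z : 0 < z0 <= z ->
  Rabs (- (liouville_q z * liouville z) * sin z) <= liouville_c * (1 + damped_energy z0) / z ^ 2.
Proof.
  intro Hz. pose proof (energy_bound z0 z Hz) as HE. unfold energy in HE.
  set (u := liouville z) in *. set (E := damped_energy z0) in *.
  assert (Hu : Rabs u <= 1 + E).
  { pose proof (pow2_ge_0 (liouville_d1 z)).
    destruct (Rle_dec (Rabs u) 1); [nra|].
    assert (Rabs u * Rabs u = u ^ 2) by (rewrite <- Rabs_mult; simpl; rewrite Rmult_1_r; apply Rabs_right; nra).
    nra. }
  rewrite Rabs_mult, Rabs_Ropp, Rabs_mult, Rabs_liouville_q by lra.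
  assert (Rabs (sin z) <= 1) by (apply Rabs_le, SIN_bound).
  assert (0 < z ^ 2) by (apply pow_lt; lra).
  assert (0 <= liouville_c / z ^ 2) by (apply Rdiv_le_0_compat; [apply Rabs_pos | lra]).
  pose proof (Rabs_pos (sin z)). pose proof (Rabs_pos u).
  replace (liouville_c * (1 + E) / z ^ 2) with (liouville_c / z ^ 2 * (1 + E)) by (field; lra).
  apply Rle_trans with (liouville_c / z ^ 2 * Rabs u).
  { rewrite <- (Rmult_1_r (liouville_c / z ^ 2 * Rabs u)) at 2.
    apply Rmult_le_compat_l; [apply Rmult_le_pos|]; auto. }
  apply Rmult_le_compat_l; auto.
Qed.

(* [cos_coef] agrees with [liouville] on the lattice and has integrable derivative [O(1/z^2)]. *)
Lemma liouville_lattice_limit :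
  exists L D, forall m, Rabs (liouville (lattice m) - L) <= D / lattice m.
Proof.
  set (z0 := lattice 0). assert (Hz0 : 0 < z0) by apply lattice_pos.
  set (D := liouville_c * (1 + damped_energy z0)).
  assert (HD : 0 <= D).
  { assert (0 <= damped_energy z0).
    { unfold damped_energy, energy. pose proof (exp_pos (liouville_c / z0)). nra. }
    unfold D, liouville_c. pose proof (Rabs_pos (K - / 4)). nra. }
  assert (Hz0m : forall m, z0 <= lattice m).
  { intro m. unfold z0, lattice at 1. pose proof (lattice_ge m). simpl INR. lra. }
  assert (Hstep : forall m, z0 <= lattice m <= lattice (S m)).
  { intro m. rewrite lattice_S. pose proof PI_RGT_0. pose proof (Hz0m m). lra. }
  assert (Hmono := is_derive_inv_sq_bound cos_coef
                     (fun z => - (liouville_q z * liouville z) * sin z) z0 D Hz0).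
  destruct (bracketed_seq_limit (fun m => cos_coef (lattice m)) (fun m => D / lattice m))
    as [L HL].
  - intro m. apply Rdiv_le_0_compat; [auto | apply lattice_pos].
  - intro m. apply Hmono; auto. intros t Ht.
    split; [apply is_derive_cos_coef | apply cos_coef_derive_bound]; lra.
  - intro m. apply Hmono; auto. intros t Ht.
    split; [apply is_derive_cos_coef | apply cos_coef_derive_bound]; lra.
  - exists L, D. intro m. specialize (HL m). cbv beta in HL.
    destruct (cos_sin_lattice m) as [Hc Hs]. unfold cos_coef in HL.
    now rewrite Hc, Hs, Rmult_1_r, Rmult_0_r, Rminus_0_r in HL.
Qed.

End LiouvilleAsymptotics.

Lemma besselY_lattice_asymptotic k : (1 <= k)%nat ->
  exists L D, forall m, Rabs (sqrt (lattice m) * besselY k (lattice m) - L) <= D / lattice m.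
Proof.
  intro Hk.
  destruct (bessel_equation_of_half _ _ (has_bessel_image_besselY_half k Hk)) as [y1 [y2 Hy]].
  destruct (liouville_lattice_limit (fun z => besselY_half k (z / 2)) y1 y2 (INR k ^ 2) Hy)
    as [L [D HLD]].
  exists L, D. intro m. specialize (HLD m). unfold liouville in HLD.
  replace (besselY k (lattice m)) with (besselY_half k (lattice m / 2)); auto.
  rewrite <- besselY_double by (pose proof (lattice_pos m); lra || lia).
  f_equal. field.
Qed.

Lemma cos_partial_sum th N :
  2 * sin (th / 2) * sum_n (fun m => cos (INR (S m) * th)) N
  = sin ((INR N + 3 / 2) * th) - sin (th / 2).
Proof.
  assert (Hprod : forall a b, 2 * sin a * cos b = sin (b + a) - sin (b - a))
    by (intros; rewrite sin_plus, sin_minus; ring).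
  induction N as [|N IH].
  - rewrite sum_O, Hprod. simpl INR.
    replace (1 * th + th / 2) with ((0 + 3 / 2) * th) by field.
    replace (1 * th - th / 2) with (th / 2) by field. reflexivity.
  - rewrite sum_Sn. change (plus ?a ?b) with (a + b).
    rewrite Rmult_plus_distr_l, IH, Hprod, !S_INR.
    replace ((INR N + 1 + 1) * th + th / 2) with ((INR N + 1 + 3 / 2) * th) by field.
    replace ((INR N + 1 + 1) * th - th / 2) with ((INR N + 3 / 2) * th) by field.
    ring.
Qed.

Lemma cos_partial_sum_bound x N : 0 < x < 1 ->
  Rabs (sum_n (fun m => cos (INR (S m) * (2 * PI * x))) N) <= / sin (PI * x).
Proof.
  intro Hx. pose proof PI_RGT_0.
  assert (Hs : 0 < sin (PI * x)) by (apply sin_gt_0; nra).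
  pose proof (cos_partial_sum (2 * PI * x) N) as E.
  replace (2 * PI * x / 2) with (PI * x) in E by field.
  set (C := sum_n (fun m => cos (INR (S m) * (2 * PI * x))) N) in *.
  assert (HC : Rabs (2 * sin (PI * x) * C) <= 2).
  { rewrite E. pose proof (SIN_bound ((INR N + 3 / 2) * (2 * PI * x))).
    pose proof (SIN_bound (PI * x)). apply Rabs_le. lra. }
  rewrite !Rabs_mult, (Rabs_right 2), (Rabs_right (sin _)) in HC by lra.
  apply (Rmult_le_reg_l (sin (PI * x))); auto. rewrite Rinv_r; lra.
Qed.

Lemma is_lim_seq_inv_sqrt_lattice : is_lim_seq (fun m => / sqrt (lattice m)) 0.
Proof.
  assert (Hinv : is_lim_seq (fun m => / lattice m) 0).
  { apply (is_lim_seq_ext (fun m => / (4 * PI) * / INR (S m))).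
    - intro m. unfold lattice. pose proof PI_RGT_0. pose proof (lt_0_INR (S m) ltac:(lia)).
      field. lra.
    - replace (Finite 0) with (Rbar_mult (/ (4 * PI)) 0) by (simpl; f_equal; ring).
      apply is_lim_seq_scal_l, is_lim_seq_inv_S. }
  apply (is_lim_seq_ext (fun m => sqrt (/ lattice m))); [intro; apply sqrt_inv|].
  replace (Finite 0) with (Finite (sqrt 0)) by (now rewrite sqrt_0).
  eapply filterlim_comp; [exact Hinv|].
  apply continuity_pt_filterlim, continuity_pt_sqrt. lra.
Qed.

(* With [t = sqrt (lattice m)] and [t' = sqrt (lattice (S m))]: [t'^2 - t^2 = 4 pi <= t^2]. *)
Lemma inv_sqrt_lattice_step m :
  0 <= / sqrt (lattice m) - / sqrt (lattice (S m)) /\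
  / (lattice m * sqrt (lattice m)) <= / sqrt (lattice m) - / sqrt (lattice (S m)).
Proof.
  pose proof (lattice_pos m). pose proof (lattice_pos (S m)). pose proof (lattice_ge m).
  pose proof (lattice_S m). pose proof PI_RGT_0. pose proof PI2_1.
  assert (Ht : 0 < sqrt (lattice m)) by (apply sqrt_lt_R0; lra).
  assert (Ht' : 0 < sqrt (lattice (S m))) by (apply sqrt_lt_R0; lra).
  pose proof (sqrt_sqrt (lattice m) ltac:(lra)). pose proof (sqrt_sqrt (lattice (S m)) ltac:(lra)).
  set (t := sqrt (lattice m)) in *. set (t' := sqrt (lattice (S m))) in *.
  assert (t < t') by nra. assert (t' <= 2 * t) by nra.
  replace (/ t - / t') with ((t' - t) / (t * t')) by (field; lra).
  rewrite <- H5. split; [apply Rdiv_le_0_compat; nra|].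
  assert (Hd : (t' - t) * (t + t') = 4 * PI) by nra.
  assert (Hkey : t' <= (t' - t) * t ^ 2).
  { apply (Rmult_le_reg_r (t + t')); [lra|].
    replace ((t' - t) * t ^ 2 * (t + t')) with (4 * PI * t ^ 2) by (rewrite <- Hd; ring). nra. }
  replace ((t' - t) / (t * t')) with (/ (t * t * t) + ((t' - t) * t ^ 2 - t') / (t * t * t * t'))
    by (field; lra).
  assert (0 <= ((t' - t) * t ^ 2 - t') / (t * t * t * t')) by (apply Rdiv_le_0_compat; nra).
  lra.
Qed.

Lemma ex_series_inv_sqrt_lattice_step :
  ex_series (fun m => / sqrt (lattice m) - / sqrt (lattice (S m))).
Proof. apply (ex_series_telescope (fun m => / sqrt (lattice m))), is_lim_seq_inv_sqrt_lattice. Qed.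

(* Dirichlet's test: the partial sums of [cos (2 pi m x)] are bounded for [0 < x < 1]. *)
Lemma ex_series_inv_sqrt_lattice_cos x : 0 < x < 1 ->
  ex_series (fun m => / sqrt (lattice m) * cos (INR (S m) * (2 * PI * x))).
Proof.
  intro Hx. apply (partial_summation_R (fun m => / sqrt (lattice m))).
  - exists (/ sin (PI * x)). intro N. now apply cos_partial_sum_bound.
  - apply is_lim_seq_inv_sqrt_lattice.
  - apply (ex_series_Rabs_le _ (fun m => / sqrt (lattice m) - / sqrt (lattice (S m))));
      [|exact ex_series_inv_sqrt_lattice_step]. intro m.
    unfold norm; simpl; unfold abs, minus, plus, opp; simpl. rewrite Rabs_Rabsolu.
    destruct (inv_sqrt_lattice_step m) as [Hm _]. rewrite Rabs_left1; lra.
Qed.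

Lemma ex_series_lattice_asymptotic (c : nat -> R) L D x : 0 < x < 1 ->
  (forall m, Rabs (c m - L) <= D / lattice m) ->
  ex_series (fun m => c m / sqrt (lattice m) * cos (INR (S m) * (2 * PI * x))).
Proof.
  intros Hx HLD.
  assert (HD : 0 <= D).
  { pose proof (HLD 0%nat). pose proof (Rabs_pos (c 0%nat - L)). pose proof (lattice_pos 0).
    apply (Rmult_le_reg_r (/ lattice 0)); [apply Rinv_0_lt_compat; auto|].
    rewrite Rmult_0_l. unfold Rdiv in *. lra. }
  set (a := fun m => / sqrt (lattice m)). set (b := fun m => cos (INR (S m) * (2 * PI * x))).
  assert (Herr : ex_series (fun m => (c m - L) * a m * b m)).
  { apply (ex_series_Rabs_le _ (fun m => D * (a m - a (S m)))).
    - intro m. destruct (inv_sqrt_lattice_step m) as [_ Hstep]. fold (a m) (a (S m)) in Hstep.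
      pose proof (lattice_pos m). pose proof (HLD m).
      assert (Ha : 0 < a m) by (apply Rinv_0_lt_compat, sqrt_lt_R0; lra).
      assert (Hb : Rabs (b m) <= 1) by (apply Rabs_le, COS_bound).
      rewrite !Rabs_mult, (Rabs_right (a m)) by lra.
      pose proof (Rabs_pos (b m)). pose proof (Rabs_pos (c m - L)).
      apply Rle_trans with (Rabs (c m - L) * a m).
      { rewrite <- (Rmult_1_r (Rabs (c m - L) * a m)) at 2.
        apply Rmult_le_compat_l; [apply Rmult_le_pos|]; lra. }
      apply Rle_trans with (D / lattice m * a m); [apply Rmult_le_compat_r; lra|].
      replace (D / lattice m * a m) with (D * / (lattice m * sqrt (lattice m)))
        by (unfold a; field; split; [apply Rgt_not_eq, sqrt_lt_R0|]; lra).
      apply Rmult_le_compat_l; auto.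
    - apply (ex_series_scal_l D (fun m => a m - a (S m))), ex_series_inv_sqrt_lattice_step. }
  eapply ex_series_ext;
    [|exact (ex_series_plus _ _ (ex_series_scal_l L _ (ex_series_inv_sqrt_lattice_cos x Hx)) Herr)].
  intro m. change (plus ?p ?q) with (p + q). cbv beta.
  match goal with |- ?A = ?B => change (@eq R A B) end.
  unfold a, b, scal, Rdiv; simpl; unfold mult; simpl. ring.
Qed.

Lemma besselY_lattice_series n x : (1 <= n)%nat -> 0 < x < 1 ->
  ex_series (fun m => besselY (2 * n) (4 * PI * INR (S m)) * cos (2 * PI * INR (S m) * x)).
Proof.
  intros Hn Hx. destruct (besselY_lattice_asymptotic (2 * n) ltac:(lia)) as [L [D HLD]].
  eapply ex_series_ext; [|exact (ex_series_lattice_asymptotic _ L D x Hx HLD)].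
  intro m. cbv beta. pose proof (lattice_pos m).
  assert (0 < sqrt (lattice m)) by (apply sqrt_lt_R0; lra).
  unfold lattice in *. replace (INR (S m) * (2 * PI * x)) with (2 * PI * INR (S m) * x) by ring.
  match goal with |- ?A = ?B => change (@eq R A B) end. field. lra.
Qed.

Theorem lemma3p1 (n : nat) (x : R) (hn : (1 <= n)%nat) (hx0 : 0 < x) (hx1 : x < 1) :
  exists S1 S2 : R,
    infinite_sum (fun m => besselY (2 * n) (4 * PI * INR (S m))
                           * cos (2 * PI * INR (S m) * x)) S1 /\
    infinite_sum (fun m =>
        (2 * (euler_gamma + ln (2 * PI * INR (S m))) * besselJ (2 * n) (4 * PI * INR (S m))
         + P_fun (2 * n) (4 * PI * INR (S m))
         - 2 * Q_fun (2 * n) (4 * PI * INR (S m)))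
        * cos (2 * PI * INR (S m) * x)) S2 /\
    infinite_sum (fun m => A_term n x (S m))
      ((-1) ^ n * PI * S1 + (-1) ^ (n + 1) * S2).
Proof.
  pose proof (infinite_sum_Series _ (besselY_lattice_series n x hn (conj hx0 hx1))) as HY.
  destruct (lemma3p1_of_Y_series n x _ hn HY) as [S2 [HP HA]].
  eexists _, S2. split; [exact HY | split; [exact HP | exact HA]].
Qed.
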